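(* Let $P=\Bbbk[x_1,x_2,x_3]$ with Poisson bracket $\{x_1,x_2\}=0$, $\{x_2,x_3\}=3x_1^2$, $\{x_3,x_1\}=0$. If $G$ is a nontrivial finite subgroup of $\mathrm{PAut}_{\mathrm{gr}}(P)$ generated by Poisson reflections, then the invariant subalgebra $P^G$ is not isomorphic to $P$ as Poisson algebras.
   Context: $\Bbbk$ is algebraically closed of characteristic $0$; $P$ has the standard grading. $\mathrm{PAut}_{\mathrm{gr}}(P)$ is the group of degree-preserving bijective algebra homomorphisms preserving the bracket. A Poisson reflection is a finite-order $\phi\in\mathrm{PAut}_{\mathrm{gr}}(P)$ such that $\phi|_{P_1}$ has eigenvalues $1,1,\xi$ with $\xi\neq1$ a primitive root of unity. $P^G=\{a\in P:\phi(a)=a\ \forall \phi\in G\}$ with the restricted bracket. *)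

From HB Require Import structures.
From mathcomp Require Import all_boot all_order all_algebra.
From mathcomp Require Import mpoly.
From Stdlib Require List.
Set Implicit Arguments. Unset Strict Implicit. Unset Printing Implicit Defensive.
Import GRing.Theory.
Local Open Scope ring_scope.

Section Defs.
Variable k : fieldType.

(* P = k[x_1,x_2,x_3]; the variables x_1,x_2,x_3 are 'X_0,'X_1,'X_2. *)
Definition P := {mpoly k[3]}.
Definition ix0 : 'I_3 := @Ordinal 3 0 isT.
Definition ix1 : 'I_3 := @Ordinal 3 1 isT.
Definition ix2 : 'I_3 := @Ordinal 3 2 isT.

(* The unique biderivation with {x1,x2}=0, {x2,x3}=3x1^2, {x3,x1}=0:
   {f,g} = 3 x1^2 (d_2 f d_3 g - d_3 f d_2 g). *)
Definition pbr (f g : P) : P :=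
  3%:R * 'X_ix0 ^+ 2 *
  (f^`M(ix1) * g^`M(ix2) - f^`M(ix2) * g^`M(ix1)).

Definition graded_paut (phi : P -> P) : Prop :=
  ((forall p q, phi (p + q) = phi p + phi q) /\ (forall p q, phi (p * q) = phi p * phi q) /\ phi 1 = 1 /\ (forall (c : k) p, phi (c *: p) = c *: phi p) /\ bijective phi /\ (forall (d : nat) (p : P), p \is d.-homog -> phi p \is d.-homog) /\ (forall p q, phi (pbr p q) = pbr (phi p) (phi q))).

Definition lin_mat (phi : P -> P) : 'M[k]_3 :=
  \matrix_(i < 3, j < 3) (phi 'X_i)@_(U_(j)%MM).

Definition poisson_reflection (phi : P -> P) : Prop :=
  (graded_paut phi /\ (exists n : nat, (0 < n)%N /\ forall p, iter n phi p = p) /\ exists xi : k, (xi != 1 /\ (exists m : nat, m.-primitive_root xi) /\ char_poly (lin_mat phi) = ('X - 1) ^+ 2 * ('X - xi%:P))).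

(* G, a set of maps P -> P (up to pointwise equality), is a finite
   subgroup of PAut_gr(P). *)
Definition finite_subgroup (G : (P -> P) -> Prop) : Prop :=
  ((forall f g, G f -> f =1 g -> G g) /\ (exists s : seq (P -> P),
         forall g, G g <-> exists2 h, List.In h s & g =1 h) /\ (forall g, G g -> graded_paut g) /\ G id /\ (forall f g, G f -> G g -> G (f \o g)) /\ (forall f, G f -> exists g, G g /\ (g \o f) =1 id)).

Definition generated_by_reflections (G : (P -> P) -> Prop) : Prop :=
  forall g, G g -> exists rs : seq (P -> P),
    (forall r, List.In r rs -> G r /\ poisson_reflection r) /\
    g =1 foldr (fun r acc => r \o acc) id rs.

Definition nontrivial (G : (P -> P) -> Prop) : Prop :=
  exists g, G g /\ ~ (g =1 id).

Definition invariant (G : (P -> P) -> Prop) (a : P) : Prop :=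
  forall g, G g -> g a = a.

Definition poisson_iso_to_invariants (G : (P -> P) -> Prop) : Prop :=
  exists psi : P -> P,
    ((forall p q, psi (p + q) = psi p + psi q) /\ (forall p q, psi (p * q) = psi p * psi q) /\ psi 1 = 1 /\ (forall (c : k) p, psi (c *: p) = c *: psi p) /\ injective psi /\ (forall a, (exists b, psi b = a) <-> invariant G a) /\ (forall p q, psi (pbr p q) = pbr (psi p) (psi q))).
End Defs.

From HB Require Import structures.
From mathcomp Require Import all_boot all_order all_algebra.
From mathcomp Require Import mpoly.
From mathcomp Require Import zify.
From Stdlib Require List.
Set Implicit Arguments. Unset Strict Implicit. Unset Printing Implicit Defensive.
Import GRing.Theory.
Local Open Scope ring_scope.

(* Since x_1 is Poisson-central, every graded Poisson automorphism r maps x_1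
   to some a x_1, and {r x_2, r x_3} = r {x_2, x_3} = 3 a^2 x_1^2 says that r has
   determinant a^2 on P_1 / k x_1.  Comparing with the characteristic polynomial
   (X - 1)^2 (X - xi) of a Poisson reflection gives a = xi <> 1, and the action on
   P_1 / k x_1 is unipotent of finite order, hence trivial.  So G acts on the
   coefficients t of the forms x_j + t x_1 (j = 2, 3) by affine maps, and the mean
   of a finite orbit yields G-invariant forms l_2, l_3 with {l_2, l_3} = 3 x_1^2.
   If psi : P -> P^G were a Poisson isomorphism, writing l_j = psi m_j and using
   that every bracket is a multiple of 3 x_1^2 gives x_1^2 = psi(x_1)^2 psi(w).
   As psi(x_1) is not constant, comparing degrees makes w constant and
   psi(x_1) = l x_1 with l <> 0; but psi(x_1) is G-invariant, while a reflection
   multiplies x_1 by xi <> 1. *)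

Lemma det_mx22 (R : comPzRingType) (A : 'M[R]_2) :
  \det A = A 0 0 * A 1 1 - A 0 1 * A 1 0.
Proof.
rewrite (expand_det_row _ 0) !big_ord_recl big_ord0 addr0 /cofactor !det_mx11 !mxE.
have -> : lift 0 (0 : 'I_1) = 1 by apply: val_inj.
have -> : lift (1 : 'I_2) (0 : 'I_1) = 0 by apply: val_inj.
by rewrite expr0 expr1 mul1r mulN1r mulrN.
Qed.

Lemma char_poly_mx11 (R : comNzRingType) (A : 'M[R]_1) : char_poly A = 'X - (A 0 0)%:P.
Proof. by rewrite /char_poly det_mx11 !mxE mulr1n. Qed.

Lemma char_poly_lblock (R : comNzRingType) m n (A : 'M[R]_m) (C : 'M[R]_(n, m))
    (B : 'M[R]_n) :
  char_poly (block_mx A 0 C B) = char_poly A * char_poly B.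
Proof.
rewrite /char_poly /char_poly_mx map_block_mx map_mx0 scalar_mx_block.
by rewrite opp_block_mx add_block_mx oppr0 addr0 det_lblock.
Qed.

Lemma lblock_mul (R : pzRingType) m n (M N : 'M[R]_(m + n)) :
  ursubmx M = 0 -> ursubmx N = 0 ->
  ursubmx (M *m N) = 0 /\ drsubmx (M *m N) = drsubmx M *m drsubmx N.
Proof.
move=> M0 N0; rewrite -[M]submxK -[N]submxK M0 N0 mulmx_block.
by rewrite !block_mxKur !block_mxKdr !mulmx0 !mul0mx !addr0 add0r.
Qed.

Lemma lblock_exp (R : pzRingType) m n (M : 'M[R]_(m + n)) k :
  ursubmx M = 0 -> ursubmx (M ^+ k) = 0 /\ drsubmx (M ^+ k) = drsubmx M ^+ k.
Proof.
move=> M0; elim: k => [|k [Mk0 MkB]].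
  by rewrite !expr0 -[1]/(1%:M) scalar_mx_block block_mxKur block_mxKdr.
by rewrite !exprSr -!mulmxE; have [-> ->] := lblock_mul Mk0 M0; rewrite MkB.
Qed.

Lemma unipotent_finite_order (F : fieldType) (A : lalgType F) (u : A) n :
  [pchar F] =i pred0 -> (0 < n)%N -> (u - 1) ^+ 2 = 0 -> u ^+ n = 1 -> u = 1.
Proof.
move=> F0 n_gt0 N2 un; set N := u - 1 in N2.
have uE : u = 1 + N by rewrite addrC subrK.
have expE m : u ^+ m = 1 + N *+ m.
  elim: m => [|m IH]; first by rewrite expr0 mulr0n addr0.
  rewrite exprSr IH uE mulrDl mul1r mulrDr mulr1 mulrnAl -expr2 N2 mul0rn addr0.
  by rewrite -addrA -mulrS.
have : N *+ n = 0 by apply: (addrI 1); rewrite -expE un addr0.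
rewrite -scaler_nat => /eqP; rewrite scaler_eq0 => /orP[|/eqP N0].
  by move/pcharf0P: F0 => ->; rewrite eqn0Ngt n_gt0.
by rewrite uE N0 addr0.
Qed.

Lemma reflection_lblock (F : fieldType) (a xi : F) (B : 'M[F]_2) n :
  [pchar F] =i pred0 -> (0 < n)%N -> B ^+ n = 1 -> \det B = a ^+ 2 -> xi != 1 ->
  ('X - a%:P) * char_poly B = ('X - 1) ^+ 2 * ('X - xi%:P) -> a != 1 /\ B = 1.
Proof.
move=> F0 n_gt0 Bn detB xi_ne1 charM.
have a_root : (a - 1) ^+ 2 * (a - xi) = 0.
  by have := congr1 (horner^~ a) charM; rewrite !hornerE subrr mul0r => <-.
have a3 : a ^+ 3 = xi.
  have := congr1 (horner^~ 0) charM; rewrite !hornerE horner_coef0 char_poly_det detB.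
  by rewrite sqrrN expr1n !mul1r mulNr -exprS => /oppr_inj.
have a_xi : a = xi.
  move/eqP: a_root; rewrite mulf_eq0 expf_eq0 /= !subr_eq0 => /orP[/eqP a1|/eqP //].
  by move: xi_ne1; rewrite -a3 a1 expr1n eqxx.
split; first by rewrite a_xi.
have charB : char_poly B = ('X - 1) ^+ 2.
  by apply: (mulfI (negbT (polyXsubC_eq0 a))); rewrite charM a_xi mulrC.
apply: (unipotent_finite_order F0 n_gt0 _ Bn).
by have := Cayley_Hamilton B; rewrite charB rmorphXn rmorphB /= horner_mx_X horner_mx_C.
Qed.

Lemma mem_map_In (T : Type) (U : eqType) (f : T -> U) (s : seq T) (y : U) :
  y \in map f s <-> exists2 x, List.In x s & y = f x.
Proof.
elim: s => [|x s IH] /=; first by split=> // [[]].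
rewrite in_cons; split.
  case/orP => [/eqP ->|/IH [z z_in ->]]; first by exists x; [left|].
  by exists z; [right|].
case=> z [<-|z_in] yE; first by rewrite yE eqxx.
by apply/orP; right; apply/IH; exists z.
Qed.

Definition mean (F : fieldType) (s : seq F) : F := (\sum_(x <- s) x) / (size s)%:R.

Lemma mean_affine_stable (F : fieldType) (s : seq F) (a b : F) :
  [pchar F] =i pred0 -> uniq s -> s != [::] -> a != 0 ->
  {subset [seq a * x + b | x <- s] <= s} -> a * mean s + b = mean s.
Proof.
move=> F0 s_uniq s_ne0 a_ne0 s_stable.
have map_uniq : uniq [seq a * x + b | x <- s].
  by rewrite map_inj_uniq // => x y /addIr /(mulfI a_ne0).
have [_ map_eq] := uniq_min_size map_uniq s_stable (eq_leq (esym (size_map _ _))).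
have := perm_big _ (uniq_perm map_uniq s_uniq map_eq) : \sum_(x <- _) x = _.
rewrite big_map big_split /= -mulr_sumr big_const_seq count_predT iter_addr_0.
have size_ne0 : (size s)%:R != 0 :> F.
  by move/pcharf0P: F0 => ->; rewrite size_eq0.
move=> sum_eq; apply: (mulIf size_ne0).
by rewrite /mean mulrDl mulrA !divfK // mulr_natr.
Qed.

Lemma scalable_mulr_nat (F : pzRingType) (A : lalgType F) (f : A -> A) :
  (forall c v, f (c *: v) = c *: f v) -> forall n v, f (n%:R * v) = n%:R * f v.
Proof. by move=> fZ n v; rewrite !mulr_natl -!scaler_nat fZ. Qed.

Lemma mpolyX_neq0 (R : idomainType) n (i : 'I_n) : 'X_i != 0 :> {mpoly R[n]}.
Proof. by rewrite -msize_poly_eq0 msizeX. Qed.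

Lemma dhomogX1 (R : nzRingType) n (i : 'I_n) : ('X_i : {mpoly R[n]}) \is 1.-homog.
Proof. by rewrite dhomogX; apply/eqP/mdeg1. Qed.

Lemma dhomog1E (R : nzRingType) n (p : {mpoly R[n]}) :
  p \is 1.-homog -> p = \sum_j p@_U_(j) *: 'X_j.
Proof.
move=> p_homog; apply/mpolyP => m; rewrite raddf_sum /=.
under eq_bigr do rewrite mcoeffZ.
have [/mdeg1P [i /eqP ->]|m_deg] := boolP (mdeg m == 1%N).
  rewrite (bigD1 i) //= mcoeffX eqxx mulr1 big1 ?addr0 // => j /negbTE j_ne_i.
  by rewrite mcoeffX eq_mnm1 j_ne_i mulr0.
rewrite (dhomog_nemf_coeff p_homog m_deg) big1 // => j _.
by rewrite mcoeffX; case: eqP => [mE|]; [move: m_deg; rewrite -mE mdeg1 | rewrite mulr0].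
Qed.

Lemma mderivXE (R : nzRingType) n (i j : 'I_n) :
  ('X_i : {mpoly R[n]})^`M(j) = (i == j)%:R.
Proof.
rewrite mderivX mnm1E; case: eqP => [->|_]; last by rewrite scale0r.
have -> : (U_(j) - U_(j) = 0)%MM by apply/mnmP => l; rewrite mnmBE subnn mnm0E.
by rewrite mpolyX0 scale1r.
Qed.

Lemma mderiv_sumX (R : nzRingType) n (u : 'I_n -> R) (i : 'I_n) :
  (\sum_j u j *: 'X_j : {mpoly R[n]})^`M(i) = (u i)%:MP.
Proof.
rewrite raddf_sum /= (bigD1 i) //= mderivZ mderivXE eqxx big1 ?addr0.
  by rewrite -alg_mpolyC.
by move=> j /negbTE j_ne_i; rewrite mderivZ mderivXE j_ne_i scaler0.
Qed.

Lemma sqr_eq_scale_sqr (F : closedFieldType) n (x y : {mpoly F[n]}) (c : F) :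
  y ^+ 2 = c *: x ^+ 2 -> exists l, y = l *: x.
Proof.
have [mu mu2] : exists mu, mu ^+ 2 = c.
  have [mu mu_root] := @solve_monicpoly F 2 (nth 0 [:: c]) isT.
  by exists mu; rewrite mu_root !big_ord_recl big_ord0 /= mulr1 mul0r !addr0.
rewrite -mu2 -exprZn => /eqP; rewrite -subr_eq0 subr_sqr mulf_eq0 subr_eq0 addr_eq0.
by case/orP=> /eqP ->; [exists mu | exists (- mu); rewrite scaleNr].
Qed.

Lemma sqr_mul_eq_sqrX (F : closedFieldType) n (y w : {mpoly F[n]}) (i : 'I_n) :
  (forall c, y != c%:MP) -> 'X_i ^+ 2 = y ^+ 2 * w -> exists l, y = l *: 'X_i.
Proof.
move=> y_nonconst X2E.
have X2_ne0 : 'X_i ^+ 2 != 0 :> {mpoly F[n]} by rewrite expf_neq0 // mpolyX_neq0.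
have y_ne0 : y != 0 by rewrite -(mpolyC0 n F).
have w_ne0 : w != 0 by apply: contraNneq X2_ne0 => w0; rewrite X2E w0 mulr0.
have sizeE := congr1 (fun p => msize p) X2E.
rewrite !expr2 !msizeM ?mulf_neq0 ?mpolyX_neq0 // msizeX mdeg1 in sizeE.
have y_size0 : msize y != 0%N by rewrite msize_poly_eq0.
have w_size0 : msize w != 0%N by rewrite msize_poly_eq0.
have y_size1 : msize y != 1%N.
  by apply/negP => /msize_poly1P [c _ yE]; move: (y_nonconst c); rewrite yE eqxx.
(* [msize] is total degree + 1: [2 = 2 deg y + deg w] with [deg y > 0]. *)
have /msize_poly1P [c c_ne0 wE] : msize w == 1%N.
  move: sizeE y_size0 w_size0 y_size1; move: (msize y) (msize w) => sy sw.
  by rewrite -!subn1 => *; apply/eqP; lia.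
apply: (@sqr_eq_scale_sqr _ _ _ _ c^-1).
by rewrite X2E wE mulrC mul_mpolyC scalerA mulVf ?scale1r.
Qed.

Lemma lshift_ix0 (i : 'I_1) : lshift 2 i = ix0.
Proof. by apply: val_inj; rewrite /= ord1. Qed.

Lemma neq_ix0_rshift (j : 'I_3) : j != ix0 -> exists i : 'I_2, j = rshift 1 i.
Proof.
by case: j => [[|m] //= m_lt _]; exists (Ordinal (m_lt : (m < 2)%N)); apply: val_inj.
Qed.

Lemma rshift_ix12 (i : 'I_2) : rshift 1 i = ix1 \/ rshift 1 i = ix2.
Proof. by case: i => [[|[|//]] ?]; [left | right]; apply: val_inj. Qed.

Section GradedPoissonAutomorphisms.
Variable k : fieldType.
Hypothesis k_char0 : [pchar k] =i pred0.

Lemma pbr_X0l (q : P k) : pbr 'X_ix0 q = 0.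
Proof. by rewrite /pbr !mderivXE /= !mul0r subrr mulr0. Qed.

Lemma pbr_X12 : pbr 'X_ix1 'X_ix2 = 3%:R * 'X_ix0 ^+ 2 :> P k.
Proof. by rewrite /pbr !mderivXE /= mulr1 mulr0 subr0 mulr1. Qed.

Lemma pbr_addX0 (p q : P k) (s t : k) :
  pbr (p + s *: 'X_ix0) (q + t *: 'X_ix0) = pbr p q.
Proof. by rewrite /pbr !mderivD !mderivZ !mderivXE /= !scaler0 !addr0. Qed.

Lemma pbr_sumX (u v : 'I_3 -> k) :
  pbr (\sum_j u j *: 'X_j) (\sum_j v j *: 'X_j) =
  3%:R * 'X_ix0 ^+ 2 * (u ix1 * v ix2 - u ix2 * v ix1)%:MP.
Proof. by rewrite /pbr !mderiv_sumX mpolyCB !mpolyCM. Qed.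

Lemma three_neq0 : (3%:R : P k) != 0.
Proof. by rewrite -mpolyC_nat mpolyC_eq0; move/pcharf0P: k_char0 => ->. Qed.

Lemma three_X0_sqr_neq0 : (3%:R * 'X_ix0 ^+ 2 : P k) != 0.
Proof. by rewrite mulf_neq0 ?expf_neq0 ?mpolyX_neq0 ?three_neq0. Qed.

Section GradedAutomorphism.
Variable r : P k -> P k.
Hypothesis r_aut : graded_paut r.

Lemma graded_paut0 : r 0 = 0.
Proof. by have [_ [_ [_ [rZ _]]]] := r_aut; have := rZ 0 0; rewrite !scale0r. Qed.

Lemma graded_paut_sumX (u : 'I_3 -> k) :
  r (\sum_j u j *: 'X_j) = \sum_j u j *: r 'X_j.
Proof.
have [rD [_ [_ [rZ _]]]] := r_aut.
by rewrite (big_morph r rD graded_paut0); apply: eq_bigr => j _; rewrite rZ.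
Qed.

Lemma graded_paut_X i : r 'X_i = \sum_j lin_mat r i j *: 'X_j.
Proof.
have [_ [_ [_ [_ [_ [r_homog _]]]]]] := r_aut.
rewrite [LHS](dhomog1E (r_homog _ _ (dhomogX1 _ _))).
by apply: eq_bigr => j _; rewrite mxE.
Qed.

Lemma lin_mat_iter n : lin_mat (iter n r) = lin_mat r ^+ n.
Proof.
elim: n => [|n IH]; first by apply/matrixP => i j; rewrite !mxE mcoeffXU.
have [_ [_ [_ [_ [_ [r_homog _]]]]]] := r_aut.
have iter_homog i : iter n r 'X_i \is 1.-homog.
  by elim: n {IH} => [|n IHn]; [exact: dhomogX1 | exact: r_homog].
apply/matrixP => i j; rewrite exprSr -IH !mxE /= (dhomog1E (iter_homog i)).
rewrite graded_paut_sumX raddf_sum /=; apply: eq_bigr => l _.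
by rewrite mcoeffZ !mxE.
Qed.

Lemma lin_mat_X0_rshift (i : 'I_2) : lin_mat r ix0 (rshift 1 i) = 0.
Proof.
have [_ [_ [_ [_ [[g _ rgK] [_ r_pbr]]]]]] := r_aut.
have central q : pbr (r 'X_ix0) (r q) = 0 by rewrite -r_pbr pbr_X0l graded_paut0.
have cancel3 (c : k) : 3%:R * 'X_ix0 ^+ 2 * c%:MP = 0 -> c = 0.
  by move/eqP; rewrite mulf_eq0 (negbTE three_X0_sqr_neq0) mpolyC_eq0 => /eqP.
case: (rshift_ix12 i) => ->; apply: cancel3.
- have := central (g 'X_ix2); rewrite rgK graded_paut_X /pbr !mderiv_sumX !mderivXE /=.
  by rewrite mulr1 mulr0 subr0.
- have := central (g 'X_ix1); rewrite rgK graded_paut_X /pbr !mderiv_sumX !mderivXE /=.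
  by rewrite mulr0 mulr1 sub0r mulrN => /eqP; rewrite oppr_eq0 => /eqP.
Qed.

Lemma lin_mat_ursubmx : ursubmx (lin_mat r : 'M_(1 + 2)) = 0.
Proof. by apply/matrixP => i j; have := lin_mat_X0_rshift j; rewrite !mxE lshift_ix0. Qed.

Lemma graded_paut_X0 : r 'X_ix0 = lin_mat r ix0 ix0 *: 'X_ix0.
Proof.
rewrite graded_paut_X (@big_split_ord _ _ _ 1 2) /= big_ord1 lshift_ix0.
by rewrite big1 ?addr0 // => i _; rewrite lin_mat_X0_rshift scale0r.
Qed.

Lemma lin_mat_X0_neq0 : lin_mat r ix0 ix0 != 0.
Proof.
have [_ [_ [_ [_ [r_bij _]]]]] := r_aut.
apply/eqP => a0; have := graded_paut_X0; rewrite a0 scale0r -graded_paut0.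
by move/(bij_inj r_bij)/eqP; apply/negP; exact: mpolyX_neq0.
Qed.

Lemma det_drsubmx_lin_mat :
  \det (drsubmx (lin_mat r : 'M_(1 + 2))) = lin_mat r ix0 ix0 ^+ 2.
Proof.
have [_ [rM [_ [rZ [_ [_ r_pbr]]]]]] := r_aut.
have := r_pbr 'X_ix1 'X_ix2.
rewrite pbr_X12 (scalable_mulr_nat rZ) expr2 rM graded_paut_X0 -expr2 exprZn.
rewrite !graded_paut_X pbr_sumX -mul_mpolyC [X in 3%:R * X]mulrC mulrA.
move/(mulfI three_X0_sqr_neq0)/eqP; rewrite mpolyC_eq det_mx22 !mxE => /eqP ->.
have -> : rshift 1 (0 : 'I_2) = ix1 by apply: val_inj.
by have -> : rshift 1 (1 : 'I_2) = ix2 by apply: val_inj.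
Qed.

End GradedAutomorphism.

Lemma poisson_reflection_lin_mat (r : P k -> P k) : poisson_reflection r ->
  lin_mat r ix0 ix0 != 1 /\ drsubmx (lin_mat r : 'M_(1 + 2)) = 1.
Proof.
move=> [r_aut [[n [n_gt0 r_n]] [xi [xi_ne1 [_ char_r]]]]].
set M : 'M_(1 + 2) := lin_mat r.
have M0 := lin_mat_ursubmx r_aut.
have Mn : M ^+ n = 1.
  rewrite -lin_mat_iter //; apply/matrixP => i j; rewrite !mxE r_n.
  by rewrite mcoeffXU.
have ulM : char_poly (ulsubmx M) = 'X - (lin_mat r ix0 ix0)%:P.
  by rewrite char_poly_mx11 !mxE lshift_ix0.
have charM : char_poly M = char_poly (ulsubmx M) * char_poly (drsubmx M).
  by rewrite -[M in LHS]submxK M0 char_poly_lblock.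
apply: (reflection_lblock k_char0 n_gt0 _ (det_drsubmx_lin_mat r_aut) xi_ne1).
  by rewrite -(lblock_exp n M0).2 Mn -[1]/(1%:M) scalar_mx_block block_mxKdr.
by rewrite -ulM -charM.
Qed.

Lemma poisson_reflection_X (r : P k -> P k) (j : 'I_3) :
  poisson_reflection r -> j != ix0 -> r 'X_j = 'X_j + lin_mat r j ix0 *: 'X_ix0.
Proof.
move=> r_refl /neq_ix0_rshift [i ->]; have [_ B1] := poisson_reflection_lin_mat r_refl.
have B1E l : lin_mat r (rshift 1 i) (rshift 1 l) = (i == l)%:R.
  by have := congr1 (fun B : 'M_2 => B i l) B1; rewrite !mxE.
rewrite (graded_paut_X r_refl.1) (@big_split_ord _ _ _ 1 2) /= big_ord1 lshift_ix0 addrC.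
under eq_bigr do rewrite B1E.
rewrite (bigD1 i) //= eqxx scale1r big1 ?addr0 // => l /negbTE.
by rewrite eq_sym => ->; rewrite scale0r.
Qed.

Lemma poisson_reflection_fixed_X0 (r : P k -> P k) (l : k) : poisson_reflection r ->
  r (l *: 'X_ix0) = l *: 'X_ix0 -> l = 0.
Proof.
move=> r_refl; have [a_ne1 _] := poisson_reflection_lin_mat r_refl.
have [_ [_ [_ [rZ _]]]] := r_refl.1.
rewrite rZ (graded_paut_X0 r_refl.1) scalerA => /eqP.
rewrite -subr_eq0 -scalerBl scaler_eq0 (negbTE (mpolyX_neq0 _ _)) orbF.
rewrite -{2}[l]mulr1 -mulrBr mulf_eq0 subr_eq0 (negbTE a_ne1) orbF.
by move/eqP.
Qed.

Definition fixes_mod_X0 (j : 'I_3) (g : P k -> P k) : Prop :=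
  exists b : k, g 'X_j = 'X_j + b *: 'X_ix0.

Lemma fixes_mod_X0_comp j (f g : P k -> P k) : graded_paut f ->
  fixes_mod_X0 j f -> fixes_mod_X0 j g -> fixes_mod_X0 j (f \o g).
Proof.
move=> f_aut [b fj] [c gj]; have [fD [_ [_ [fZ _]]]] := f_aut.
exists (b + c * lin_mat f ix0 ix0).
by rewrite /= gj fD fZ fj (graded_paut_X0 f_aut) scalerA -addrA -scalerDl.
Qed.

Lemma generated_fixes_mod_X0 (G : (P k -> P k) -> Prop) j :
  j != ix0 -> generated_by_reflections G -> forall g, G g -> fixes_mod_X0 j g.
Proof.
move=> j_ne0 G_gen g Gg; have [rs [rs_refl gE]] := G_gen g Gg.
suff [b gj] : fixes_mod_X0 j (foldr (fun r acc => r \o acc) id rs).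
  by exists b; rewrite gE.
elim: rs rs_refl {gE} => [|r rs IH] rs_refl /=; first by exists 0; rewrite scale0r addr0.
have [_ r_refl] := rs_refl r (or_introl erefl).
apply: fixes_mod_X0_comp r_refl.1 _ (IH _).
  by exists (lin_mat r j ix0); exact: poisson_reflection_X.
by move=> q q_in; apply: rs_refl; right.
Qed.

Lemma generated_fixed_form (G : (P k -> P k) -> Prop) j :
  j != ix0 -> finite_subgroup G -> generated_by_reflections G ->
  exists t : k, forall g, G g -> g ('X_j + t *: 'X_ix0) = 'X_j + t *: 'X_ix0.
Proof.
move=> j_ne0 [_ [[s sE] [G_aut [G_id [G_comp _]]]]] G_gen.
pose shift (h : P k -> P k) := (h 'X_j)@_U_(ix0).
have shiftE h b : h 'X_j = 'X_j + b *: 'X_ix0 -> shift h = b.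
  move=> hj; rewrite /shift hj mcoeffD mcoeffZ !mcoeffXU eqxx (negbTE j_ne0).
  by rewrite mulr1 add0r.
have fixes h : G h -> h 'X_j = 'X_j + shift h *: 'X_ix0.
  move=> Gh; have [b hj] := generated_fixes_mod_X0 j_ne0 G_gen Gh.
  by rewrite hj (shiftE _ _ hj).
have affine g t : G g ->
    g ('X_j + t *: 'X_ix0) = 'X_j + (lin_mat g ix0 ix0 * t + shift g) *: 'X_ix0.
  move=> Gg; have [gD [_ [_ [gZ _]]]] := G_aut g Gg.
  rewrite gD gZ fixes // (graded_paut_X0 (G_aut g Gg)) scalerA -addrA -scalerDl.
  by rewrite [shift g + _]addrC mulrC.
(* The shifts of the elements of [G] form the orbit of [0] under these affine maps. *)
pose O := undup [seq shift h | h <- s].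
have O_in h : G h -> shift h \in O.
  move=> Gh; have [h' h'_in hE] := (sE h).1 Gh.
  by rewrite mem_undup; apply/mem_map_In; exists h'; rewrite // /shift hE.
have O_stable g : G g ->
    {subset [seq lin_mat g ix0 ix0 * x + shift g | x <- O] <= O}.
  move=> Gg _ /mapP [x + ->]; rewrite mem_undup => /mem_map_In [h h_in ->].
  have Gh : G h by apply/sE; exists h.
  have -> : lin_mat g ix0 ix0 * shift h + shift g = shift (g \o h).
    by apply/esym/shiftE; rewrite /= fixes // affine.
  by apply: O_in; apply: G_comp.
exists (mean O) => g Gg; rewrite affine // mean_affine_stable ?undup_uniq //.
- by apply/eqP => O0; have := O_in _ G_id; rewrite O0.
- exact: lin_mat_X0_neq0 (G_aut g Gg).
- exact: O_stable.
Qed.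

Lemma generated_nontrivial_reflection (G : (P k -> P k) -> Prop) :
  generated_by_reflections G -> nontrivial G -> exists r, G r /\ poisson_reflection r.
Proof.
move=> G_gen [g [Gg g_nid]]; have [[|r rs] [rs_refl gE]] := G_gen g Gg.
  by case: g_nid => p; rewrite gE.
by exists r; apply: rs_refl; left.
Qed.

End GradedPoissonAutomorphisms.

Section PoissonEmbedding.
Variable k : closedFieldType.
Hypothesis k_char0 : [pchar k] =i pred0.
Variable psi : P k -> P k.
Hypothesis psiM : forall p q, psi (p * q) = psi p * psi q.
Hypothesis psi1 : psi 1 = 1.
Hypothesis psiZ : forall (c : k) p, psi (c *: p) = c *: psi p.
Hypothesis psi_inj : injective psi.
Hypothesis psi_pbr : forall p q, psi (pbr p q) = pbr (psi p) (psi q).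

Lemma poisson_embedding_X0_nonconst (c : k) : psi 'X_ix0 != c%:MP.
Proof.
apply/eqP => psiX0; have : psi 'X_ix0 = psi c%:MP by rewrite psiX0 -alg_mpolyC psiZ psi1.
move/psi_inj/(congr1 (fun p => msize p)); rewrite msizeX mdeg1 msizeC.
by case: (c != 0).
Qed.

Lemma poisson_embedding_X0 (a b : P k) :
  pbr (psi a) (psi b) = pbr 'X_ix1 'X_ix2 -> exists l, psi 'X_ix0 = l *: 'X_ix0.
Proof.
move=> psi_ab.
apply: (sqr_mul_eq_sqrX (w := psi (a^`M(ix1) * b^`M(ix2) - a^`M(ix2) * b^`M(ix1)))).
  exact: poisson_embedding_X0_nonconst.
apply: (mulfI (three_neq0 k_char0)); rewrite [RHS]mulrA -pbr_X12 -psi_ab -psi_pbr.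
have psi3 : psi 3%:R = 3%:R by rewrite -[3%:R]mulr1 (scalable_mulr_nat psiZ) psi1.
by rewrite /pbr !psiM psi3 expr2.
Qed.

End PoissonEmbedding.

Theorem lemma3p1p2 (k : closedFieldType) (hchar : [pchar k] =i pred0)
  (G : (P k -> P k) -> Prop) :
  finite_subgroup G -> generated_by_reflections G -> nontrivial G ->
  ~ poisson_iso_to_invariants G.
Proof.
move=> G_fin G_gen G_nontriv [psi [_ [psiM [psi1 [psiZ [psi_inj [psi_im psi_pbr]]]]]]].
have [r [Gr r_refl]] := generated_nontrivial_reflection G_gen G_nontriv.
have [t1 fixed1] := generated_fixed_form hchar (j := ix1) isT G_fin G_gen.
have [t2 fixed2] := generated_fixed_form hchar (j := ix2) isT G_fin G_gen.
have [a psi_a] := (psi_im _).2 fixed1.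
have [b psi_b] := (psi_im _).2 fixed2.
have [l psiX0] : exists l, psi 'X_ix0 = l *: 'X_ix0.
  apply: (poisson_embedding_X0 hchar psiM psi1 psiZ psi_inj psi_pbr (a := a) (b := b)).
  by rewrite psi_a psi_b pbr_addX0.
have /(poisson_reflection_fixed_X0 hchar r_refl) l0 : r (l *: 'X_ix0) = l *: 'X_ix0.
  by rewrite -psiX0; apply: (psi_im _).1 => //; exists 'X_ix0.
have := poisson_embedding_X0_nonconst psi1 psiZ psi_inj 0.
by rewrite psiX0 l0 scale0r mpolyC0 eqxx.
Qed.
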